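(* Let $T$ be a minimal homeomorphism of a compact metric space $X$, let $G$ be a locally compact second countable group, let $f\colon X\to G$ be a continuous regular cocycle and let $C\subseteq X\times G$ be a surjective $\mathbf T_f$-orbit closure. Then every nonempty relatively open subset of $C$ projects, under the first coordinate projection $\pi_X\colon X\times G\to X$, onto a subset of $X$ with nonempty interior.
   Context: The cocycle is $f(n,x)=f(T^{n-1}x)\cdots f(x)$ for $n\ge1$, $f(0,x)=\mathbf 1_G$, $f(n,x)=f(-n,T^nx)^{-1}$ for $n<0$. The skew product is $\mathbf T_f(x,g)=(Tx,f(x)g)$ on $X\times G$. A surjective $\mathbf T_f$-orbit closure is the closure of the $\mathbf T_f$-orbit of a single point of $X\times G$ which projects onto all of $X$ under $\pi_X$; $f$ is regular if such an orbit closure exists. *)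

From HB Require Import structures.
From mathcomp Require Import all_boot all_order all_algebra.
From mathcomp Require Import all_classical all_reals all_analysis.
Set Implicit Arguments. Unset Strict Implicit. Unset Printing Implicit Defensive.
Import Order.TTheory GRing.Theory Num.Theory.
Local Open Scope classical_set_scope.
Local Open Scope ring_scope.

Definition iterz (A : Type) (F Fi : A -> A) (n : int) : A -> A :=
  match n with
  | Posz k => iter k F
  | Negz k => iter k.+1 Fi
  end.

Definition homeomorphism_with (X : topologicalType) (T Ti : X -> X) : Prop :=
  [/\ continuous T, continuous Ti, cancel T Ti & cancel Ti T].

Definition orbitz (A : Type) (F Fi : A -> A) (a : A) : set A :=
  [set iterz F Fi n a | n in [set: int]].

Definition minimal_homeo (X : topologicalType) (T Ti : X -> X) : Prop :=
  forall x : X, closure (orbitz T Ti x) = [set: X].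

Definition topological_group (G : topologicalType)
  (mul : G -> G -> G) (inv : G -> G) (one : G) : Prop :=
  (forall a b c, mul a (mul b c) = mul (mul a b) c) /\
  (forall a, mul one a = a) /\ (forall a, mul a one = a) /\
  (forall a, mul (inv a) a = one) /\ (forall a, mul a (inv a) = one) /\
  continuous (fun p : G * G => mul p.1 p.2) /\ continuous inv.

Definition lcsc_group (G : topologicalType)
  (mul : G -> G -> G) (inv : G -> G) (one : G) : Prop :=
  [/\ topological_group mul inv one, hausdorff_space G,
      locally_compact [set: G] & @second_countable G].

Definition skew (X G : Type) (mul : G -> G -> G) (T : X -> X) (f : X -> G)
  (p : X * G) : X * G := (T p.1, mul (f p.1) p.2).
Definition skew_inv (X G : Type) (mul : G -> G -> G) (inv : G -> G)
  (Ti : X -> X) (f : X -> G) (p : X * G) : X * G :=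
  (Ti p.1, mul (inv (f (Ti p.1))) p.2).

Definition surjective_orbit_closure (X G : topologicalType)
  (mul : G -> G -> G) (inv : G -> G) (T Ti : X -> X) (f : X -> G)
  (C : set (X * G)) : Prop :=
  exists p : X * G,
    C = closure (orbitz (skew mul T f) (skew_inv mul inv Ti f) p) /\
    fst @` C = [set: X].

Definition regular_cocycle (X G : topologicalType)
  (mul : G -> G -> G) (inv : G -> G) (T Ti : X -> X) (f : X -> G) : Prop :=
  exists C, surjective_orbit_closure mul inv T Ti f C.

Definition rel_open (Y : topologicalType) (C U : set Y) : Prop :=
  exists V : set Y, open V /\ U = V `&` C.

(* Let (a0, b0) = T_f^n0 p be a point of the orbit in the open set V cutting
   out U, and Ox * W a box around it inside V.  For a compact neighbourhood L
   of 1, the sets Q_h = {x | (x, h l) \in C for some l \in L}, with h ranging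
   over a countable dense subset of G, are closed and cover X since C projects
   onto X, so by Baire's theorem some Q_h has interior.  An orbit point
   (x1, g1) = T_f^m p lies over that interior with h^-1 g1 close to 1.  With
   k = n0 - m we have T_f^k (y, g) = (T^k y, f(k, y) g), f(k, .) continuous and
   T_f^k (x1, g1) = (a0, b0), so for y near x1 the points (y, h l) of C are sent
   into Ox * W; hence T^k maps a neighbourhood of x1 onto a neighbourhood of a0
   inside the projection of U. *)

From Pilot Require Import Defs.
From mathcomp Require Import all_boot all_order all_algebra.
From mathcomp Require Import all_classical all_reals all_analysis.
From mathcomp Require Import zify.
Import GRing.Theory.
Local Open Scope classical_set_scope.
Local Open Scope ring_scope.

Section IntegerIterates.
Context {A : Type} {F Fi : A -> A}.
Hypotheses (FK : cancel F Fi) (FiK : cancel Fi F).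

Lemma iterzD1 (n : int) x : iterz F Fi (n + 1) x = F (iterz F Fi n x).
Proof.
case: n => [k|[|k]].
- by have -> : Posz k + 1 = Posz k.+1 by lia.
- by rewrite /= FiK.
- have -> : Negz k.+1 + 1 = Negz k by rewrite !NegzE; lia.
  by rewrite /= FiK.
Qed.

Lemma iterzB1 (n : int) x : iterz F Fi (n - 1) x = Fi (iterz F Fi n x).
Proof. by rewrite -[in RHS](subrK 1 n) iterzD1 FK. Qed.

Lemma iterzD (a b : int) x :
  iterz F Fi (a + b) x = iterz F Fi a (iterz F Fi b x).
Proof.
elim/int_rect: a x => [|n IH|n IH] x; first by rewrite add0r.
- by rewrite -addn1 PoszD addrAC iterzD1 IH -iterzD1.
- by rewrite -addn1 PoszD opprD addrAC iterzB1 IH -iterzB1.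
Qed.

Lemma iterzK (k : int) : cancel (iterz F Fi k) (iterz F Fi (- k)).
Proof. by move=> x; rewrite -iterzD addNr. Qed.

Lemma iterzNK (k : int) : cancel (iterz F Fi (- k)) (iterz F Fi k).
Proof. by move=> x; rewrite -iterzD subrr. Qed.

End IntegerIterates.

Lemma iterz_semiconj {A B : Type} {F Fi : A -> A} {F' Fi' : B -> B}
    {phi : A -> B} :
  (forall x, phi (F x) = F' (phi x)) -> (forall x, phi (Fi x) = Fi' (phi x)) ->
  forall k x, phi (iterz F Fi k x) = iterz F' Fi' k (phi x).
Proof.
move=> phiF phiFi k x.
have phi_iter H H' : (forall y, phi (H y) = H' (phi y)) ->
    forall m, phi (iter m H x) = iter m H' (phi x).
  by move=> phiH; elim=> //= m <-.
by case: k => n; apply: phi_iter.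
Qed.

Lemma continuous_fst {A B : topologicalType} : continuous (@fst A B).
Proof. by move=> [a b]; exact: cvg_fst. Qed.

Lemma continuous_snd {A B : topologicalType} : continuous (@snd A B).
Proof. by move=> [a b]; exact: cvg_snd. Qed.

Lemma continuous_pair {A B D : topologicalType} {a : D -> A} {b : D -> B} :
  continuous a -> continuous b -> continuous (fun t => (a t, b t)).
Proof. by move=> ca cb t; apply: cvg_pair; [exact: ca | exact: cb]. Qed.

Lemma continuousT_comp {A B D : topologicalType} {f : A -> B} {g : B -> D} :
  continuous f -> continuous g -> continuous (g \o f).
Proof. by move=> cf cg x; exact: continuous_comp (cf x) (cg (f x)). Qed.

Lemma continuous_iterz {X : topologicalType} {F Fi : X -> X} (k : int) :
  continuous F -> continuous Fi -> continuous (iterz F Fi k).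
Proof.
have cit (H : X -> X) n : continuous H -> continuous (iter n H).
  move=> cH; elim: n => [|n IH] x /=; first exact: cvg_id.
  exact: continuous_comp (IH x) (cH _).
by move=> cF cFi; case: k => n /=; apply: cit.
Qed.

Lemma closure_orbitz_iterz {X : topologicalType} {F Fi : X -> X} {p q : X}
    (k : int) :
  cancel F Fi -> cancel Fi F -> continuous F -> continuous Fi ->
  closure (orbitz F Fi p) q -> closure (orbitz F Fi p) (iterz F Fi k q).
Proof.
move=> FK FiK cF cFi cl_q B /(continuous_iterz k cF cFi) /cl_q[_ [[n _ <-] Bn]].
exists (iterz F Fi k (iterz F Fi n p)); split=> //.
by exists (k + n); rewrite ?iterzD.
Qed.

Lemma locally_compact_compact_nbhs {X : topologicalType} {x : X} {P : set X} :
  locally_compact [set: X] -> hausdorff_space X -> nbhs x P ->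
  exists L, [/\ compact L, nbhs x L & L `<=` P].
Proof.
move=> lcX hX Px.
have [K Kx [cptK _]] := lcX x I.
rewrite withinET in Kx.
have [B Bx clBP] := compact_regular hX cptK Kx Px.
exists (K `&` closure B); split.
- exact: compact_closedI cptK (@closed_closure _ B).
- by apply: filterI => //; apply: filterS Bx; exact: subset_closure.
- by move=> y [_ /clBP].
Qed.

Section CompactBaire.
Context {X : topologicalType} (x0 : X).
Hypotheses (cptX : compact [set: X]) (hX : hausdorff_space X).

Lemma open_shrink_avoid {A Q : set X} :
  open A -> A !=set0 -> closed Q -> Q° = set0 ->
  exists B, [/\ open B, B !=set0 & closure B `<=` A `\` Q].
Proof.
move=> oA [x Ax] clQ Q0.
have [z [Az Qz]] : (A `\` Q) !=set0.
  apply: contrapT => AQ0; suff : Q° x by rewrite Q0.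
  apply: filterS (open_nbhs_nbhs (conj oA Ax)) => y Ay.
  by apply: contrapT => Qy; apply: AQ0; exists y.
have AQz : nbhs z (A `\` Q).
  by apply: open_nbhs_nbhs; split=> //; exact: openI oA (closed_openC clQ).
have [B Bz clB] := compact_regular hX cptX (@filterT _ (nbhs z) _) AQz.
exists B°; split; first exact: open_interior.
- by exists z; apply: nbhs_singleton; exact: nbhs_interior.
- by apply: subset_trans clB; apply: closureS; exact: interior_subset.
Qed.

Lemma compact_baire (Q : nat -> set X) :
  (forall n, closed (Q n)) -> (forall x, exists n, Q n x) ->
  exists n, (Q n)° !=set0.
Proof.
move=> clQ covQ; apply: contrapT => noint.
have Q0 n : (Q n)° = set0.
  by apply/seteqP; split=> // x Qx; apply: noint; exists n, x.
have step (nA : nat * set X) : exists B, open nA.2 -> nA.2 !=set0 ->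
    [/\ open B, B !=set0 & closure B `<=` nA.2 `\` Q nA.1].
  case: (pselect (open nA.2 /\ nA.2 !=set0)) => [[oA A0]|nAo].
    by have [B BP] := open_shrink_avoid oA A0 (clQ nA.1) (Q0 nA.1); exists B.
  by exists set0 => oA A0; exfalso; apply: nAo.
(* Shrink nonempty open sets [O n.+1] with closure in [O n `\` Q n]; a
   cluster point of the [O n] then lies in no [Q n]. *)
have [g gP] := choice step.
pose O := fix O n := if n is n'.+1 then g (n', O n') else [set: X].
have O_open n : open (O n) /\ O n !=set0.
  elim: n => [|n [oO nO]]; first by split; [exact: openT | exists x0].
  by have [] := gP (n, O n) oO nO.
have O_avoid n : closure (O n.+1) `<=` O n `\` Q n.
  by have [oO nO] := O_open n; have [] := gP (n, O n) oO nO.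
have O_decr m n : (m <= n)%N -> O n `<=` O m.
  elim: n => [|n IH]; first by rewrite leqn0 => /eqP ->.
  rewrite leq_eqVlt => /orP[/eqP -> //|/IH]; apply: subset_trans => x Ox.
  by have [] := O_avoid n x (subset_closure Ox).
pose F := filter_from [set: nat] O.
have FF : ProperFilter F.
  apply: filter_from_proper; last by move=> n _; case: (O_open n).
  apply: filter_from_filter; first by exists 0%N.
  move=> m n _ _; exists (maxn m n) => // x Ox.
  by split; apply: (O_decr _ (maxn m n)) => //; rewrite ?leq_maxl ?leq_maxr.
have [z [_ Fz]] := cptX F FF (ex_intro2 _ _ 0%N I (fun x _ => I)).
have [n Qnz] := covQ z.
have [_ nQnz] : (O n `\` Q n) z by apply: O_avoid => B /Fz; apply; exists n.+1.
exact: nQnz Qnz.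
Qed.

End CompactBaire.

Definition proj_over {X G : Type} (C : set (X * G)) (K : set G) : set X :=
  [set x | exists2 g, K g & C (x, g)].

Lemma closed_proj_over {X G : topologicalType} {C : set (X * G)} {K : set G} :
  compact [set: X] -> hausdorff_space X -> closed C -> compact K ->
  closed (proj_over C K).
Proof.
move=> cptX hX clC cptK.
have -> : proj_over C K = fst @` (([set: X] `*` K) `&` C).
  apply/seteqP; split=> [x [g Kg Cxg]|_ [[x g] [[_ Kg] Cxg] <-]].
    by exists (x, g).
  by exists g.
apply: compact_closed hX _; apply: continuous_compact.
  exact/continuous_subspaceT/continuous_fst.
exact: compact_closedI (compact_setX cptX cptK) clC.
Qed.

Section TopologicalGroup.
Context {G : topologicalType} {mul : G -> G -> G} {inv : G -> G} {one : G}.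
Hypothesis tg : topological_group mul inv one.

Let mulA a b c : mul a (mul b c) = mul (mul a b) c. Proof. by case: tg. Qed.
Let mul1g a : mul one a = a. Proof. by case: tg => _ [? _]. Qed.
Let mulg1 a : mul a one = a. Proof. by case: tg => _ [_ [? _]]. Qed.
Let mulVg a : mul (inv a) a = one. Proof. by case: tg => _ [_ [_ [? _]]]. Qed.
Let mulgV a : mul a (inv a) = one.
Proof. by case: tg => _ [_ [_ [_ [? _]]]]. Qed.
Let cont_mul : continuous (fun ab : G * G => mul ab.1 ab.2).
Proof. by case: tg => _ [_ [_ [_ [_ [? _]]]]]. Qed.
Let cont_inv : continuous inv.
Proof. by case: tg => _ [_ [_ [_ [_ [_ ?]]]]]. Qed.

Lemma mulKg a b : mul (inv a) (mul a b) = b.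
Proof. by rewrite mulA mulVg mul1g. Qed.

Lemma mulKVg a b : mul a (mul (inv a) b) = b.
Proof. by rewrite mulA mulgV mul1g. Qed.

Lemma invK a : inv (inv a) = a.
Proof. by have := mulKg (inv a) a; rewrite mulVg mulg1. Qed.

Lemma invMg a b : inv (mul a b) = mul (inv b) (inv a).
Proof.
rewrite -[RHS]mulg1 -(mulgV (mul a b)) !mulA -(mulA (inv b)) mulVg mulg1.
by rewrite mulVg mul1g.
Qed.

Lemma continuous_mulf {T : topologicalType} {a b : T -> G} :
  continuous a -> continuous b -> continuous (fun t => mul (a t) (b t)).
Proof.
move=> ca cb t; apply: (@continuous2_cvg _ _ _ _ _ _ a b mul).
- exact: (@cont_mul (a t, b t)).
- exact: ca.
- exact: cb.
Qed.

Lemma continuous_mull a : continuous (mul a).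
Proof.
have := @continuous_mulf G (fun=> a) id.
by apply; [exact: cst_continuous | move=> x; exact: cvg_id].
Qed.

Lemma nbhs1_triple_product {b : G} {W : set G} : nbhs b W ->
  exists2 P, nbhs one P &
    forall u s t, P u -> P s -> P t -> W (mul (mul u b) (mul (inv s) t)).
Proof.
move=> Wb.
pose phi (ust : G * (G * G)) := mul (mul ust.1 b) (mul (inv ust.2.1) ust.2.2).
have cphi : continuous phi.
  apply: continuous_mulf; apply: continuous_mulf.
  - exact: continuous_fst.
  - exact: cst_continuous.
  - apply: continuousT_comp cont_inv.
    exact: continuousT_comp continuous_snd continuous_fst.
  - exact: continuousT_comp continuous_snd continuous_snd.
have : nbhs (one, (one, one)) (phi @^-1` W).
  by apply: cphi; rewrite /phi /= mul1g mulVg mulg1.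
case=> -[P1 P23] /= [P1one [[P2 P3] /= [P2one P3one] P23sub]] Psub.
exists (P1 `&` P2 `&` P3); first exact: filterI (filterI P1one P2one) P3one.
move=> u s t [[Pu _] _] [[_ Ps] _] [_ Pt].
by apply: (Psub (u, (s, t))); split=> //; apply: P23sub.
Qed.

Lemma proj_over_translate_interior {X : topologicalType} (x0 : X)
    {C : set (X * G)} {L : set G} :
  compact [set: X] -> hausdorff_space X -> @second_countable G -> closed C ->
  (forall x, exists g, C (x, g)) -> compact L -> nbhs one L ->
  exists h, (proj_over C (mul h @` L))° !=set0.
Proof.
move=> cptX hX [B /pcard_surjP[e eB] [_ Bbase]] clC surjC cptL L1.
(* [h n] is a point of the [n]-th basic open set, so the [h n] are dense. *)
have /choice[h hP] : forall n, exists g : G, e n !=set0 -> e n g.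
  move=> n; case: (pselect (e n !=set0)) => [[g eng]|e0]; first by exists g.
  by exists one.
suff [n] : exists n, (proj_over C (mul (h n) @` L))° !=set0 by exists (h n).
apply: (compact_baire x0) => //.
- move=> n; apply: closed_proj_over => //; apply: continuous_compact => //.
  exact/continuous_subspaceT/continuous_mull.
- move=> x; have [g Cxg] := surjC x.
  have : nbhs g ((fun z => mul (inv z) g) @^-1` L°).
    apply: (continuous_mulf (a := inv) (b := fun=> g)) => //.
      exact: cst_continuous.
    by rewrite /= mulVg; exact: nbhs_interior.
  case/Bbase=> S [BS Sg] SL; have [n _ enS] := eB S BS.
  have Lhg : L (mul (inv (h n)) g).
    apply: interior_subset; apply: SL; rewrite -enS.
    by apply: hP; rewrite enS; exists g.
  by exists n; exists g => //; exists (mul (inv (h n)) g); rewrite ?mulKVg.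
Qed.

Section SkewProduct.
Context {X : topologicalType} {T Ti : X -> X} {f : X -> G}.
Hypothesis homT : homeomorphism_with T Ti.
Hypothesis cf : continuous f.

Let cT : continuous T. Proof. by case: homT. Qed.
Let cTi : continuous Ti. Proof. by case: homT. Qed.
Let TK : cancel T Ti. Proof. by case: homT. Qed.
Let TiK : cancel Ti T. Proof. by case: homT. Qed.

Local Notation Tf := (Defs.skew mul T f).
Local Notation Tfi := (skew_inv mul inv Ti f).

Lemma skewK : cancel Tf Tfi.
Proof. by move=> [x g]; rewrite /Defs.skew /skew_inv /= TK mulKg. Qed.

Lemma skew_invK : cancel Tfi Tf.
Proof. by move=> [x g]; rewrite /Defs.skew /skew_inv /= TiK mulKVg. Qed.

Lemma continuous_skew : continuous Tf.
Proof.
apply: continuous_pair; first exact: continuousT_comp continuous_fst cT.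
exact: continuous_mulf (continuousT_comp continuous_fst cf) continuous_snd.
Qed.

Lemma continuous_skew_inv : continuous Tfi.
Proof.
apply: continuous_pair; first exact: continuousT_comp continuous_fst cTi.
apply: continuous_mulf continuous_snd.
apply: continuousT_comp cont_inv.
exact: continuousT_comp (continuousT_comp continuous_fst cTi) cf.
Qed.

Definition cocycle (k : int) (x : X) : G := (iterz Tf Tfi k (x, one)).2.

Lemma iterz_skew k x g :
  iterz Tf Tfi k (x, g) = (iterz T Ti k x, mul (cocycle k x) g).
Proof.
have Tf_rmul (q : X * G) : ((Tf q).1, mul (Tf q).2 g) = Tf (q.1, mul q.2 g).
  by rewrite /Defs.skew /= -mulA.
have Tfi_rmul (q : X * G) : ((Tfi q).1, mul (Tfi q).2 g) = Tfi (q.1, mul q.2 g).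
  by rewrite /skew_inv /= -mulA.
have := iterz_semiconj (phi := fun q => (q.1, mul q.2 g)) (F := Tf) (Fi := Tfi)
  Tf_rmul Tfi_rmul k (x, one).
rewrite /= mul1g => <-.
by rewrite (iterz_semiconj (phi := fst) (F' := T) (Fi' := Ti)).
Qed.

Lemma continuous_cocycle k : continuous (cocycle k).
Proof.
apply: (continuousT_comp (f := fun x => iterz Tf Tfi k (x, one)))
  continuous_snd.
apply: (continuousT_comp (f := fun x => (x, one))).
  by apply: continuous_pair; [move=> x; exact: cvg_id | exact: cst_continuous].
exact: continuous_iterz continuous_skew continuous_skew_inv.
Qed.

Context {p : X * G}.
Local Notation C := (closure (orbitz Tf Tfi p)).

Lemma nbhs_proj_orbit_closure {n0 : int} {Ox : set X} {W P L : set G} {h : G} :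
  nbhs (iterz Tf Tfi n0 p).1 Ox -> nbhs one P ->
  (forall u s t, P u -> P s -> P t ->
     W (mul (mul u (iterz Tf Tfi n0 p).2) (mul (inv s) t))) ->
  L `<=` P° -> (proj_over C (mul h @` L))° !=set0 ->
  nbhs (iterz Tf Tfi n0 p).1 (fst @` ((Ox `*` W) `&` C)).
Proof.
move=> Oq0 P1 PW LP [x2 Qx2].
set Q := proj_over C (mul h @` L) in Qx2 *.
have [_ [l2 Ll2 <-] Cx2] := interior_subset Qx2.
have [_ [[m _ <-]]] :
    orbitz Tf Tfi p `&` (Q° `*` (mul (inv h) @^-1` P°)) !=set0.
  apply: Cx2; exists (Q°, mul (inv h) @^-1` P°) => //.
  split; first exact: nbhs_interior.
  apply: continuous_mull; rewrite mulKg.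
  by apply: open_nbhs_nbhs; split; [exact: open_interior | exact: LP].
case E1 : (iterz Tf Tfi m p) => [x1 g1] [/= Qx1 Pg1].
set k := n0 - m.
have q0E : iterz Tf Tfi n0 p = (iterz T Ti k x1, mul (cocycle k x1) g1).
  by rewrite -iterz_skew -E1 -(iterzD skewK skew_invK) subrK.
rewrite q0E /= in Oq0 PW *.
pose N := Q° `&` iterz T Ti k @^-1` Ox `&`
  [set y | P (mul (cocycle k y) (inv (cocycle k x1)))].
suff N_proj y : N y -> (fst @` ((Ox `*` W) `&` C)) (iterz T Ti k y).
  have : nbhs (iterz T Ti k x1) (iterz T Ti (- k) @^-1` N).
    apply: (continuous_iterz (- k) cT cTi); rewrite (iterzK TK TiK) /N.
    apply: filterI; first apply: filterI.
    - exact: open_nbhs_nbhs (conj (@open_interior _ Q) Qx1).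
    - exact: continuous_iterz k cT cTi x1 _ Oq0.
    - have := continuous_mulf (continuous_cocycle k)
        (cst_continuous (x := inv (cocycle k x1))) x1.
      by apply; rewrite /= mulgV.
  by apply: filterS => z /N_proj; rewrite (iterzNK TK TiK).
move=> [[Qy Oy] Py]; have [_ [l Ll <-] Cy] := interior_subset Qy.
exists (iterz Tf Tfi k (y, mul h l)); last by rewrite iterz_skew.
split; last exact: closure_orbitz_iterz skewK skew_invK
  continuous_skew continuous_skew_inv Cy.
rewrite iterz_skew; split=> //=.
(* f(k,y) h l = (f(k,y) f(k,x1)^-1) (f(k,x1) g1) ((h^-1 g1)^-1 l) *)
have := PW _ _ _ Py (interior_subset Pg1) (interior_subset (LP _ Ll)).
by rewrite invMg invK -!mulA mulKg mulKVg.
Qed.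

End SkewProduct.

End TopologicalGroup.

Theorem lemma2p2 (R : realType) (X : metricType R) (T Ti : X -> X)
  (G : topologicalType) (mul : G -> G -> G) (inv : G -> G) (one : G)
  (f : X -> G) (C : set (X * G)) :
  compact [set: X] ->
  homeomorphism_with T Ti ->
  minimal_homeo T Ti ->
  lcsc_group mul inv one ->
  continuous f ->
  regular_cocycle mul inv T Ti f ->
  surjective_orbit_closure mul inv T Ti f C ->
  forall U : set (X * G), rel_open C U -> U !=set0 ->
    interior (fst @` U) !=set0.
Proof.
move=> cptX homT _ [tg hG lcG scG] cf _ [p [C_def surjC]].
move=> U [V [oV ->]] [u [Vu Cu]].
have fibers x : exists g, C (x, g).
  have [[y g] Cyg /= <-] : (fst @` C) x by rewrite surjC.
  by exists g.
rewrite {}C_def in Cu fibers *.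
have [_ [[n0 _ <-] Vq0]] := Cu V (open_nbhs_nbhs (conj oV Vu)).
have [[Ox Wg] [/= Oq0 Wq0] OWV] := open_nbhs_nbhs (conj oV Vq0).
have [P P1 PW] := nbhs1_triple_product tg Wq0.
have [L [cptL L1 LP]] :=
  locally_compact_compact_nbhs lcG hG (nbhs_interior P1).
have [h Qh] := proj_over_translate_interior tg u.1 cptX
  (@metric_hausdorff _ X) scG (@closed_closure _ _) fibers cptL L1.
exists (iterz (Defs.skew mul T f) (skew_inv mul inv Ti f) n0 p).1.
apply: filterS (nbhs_proj_orbit_closure tg homT cf Oq0 P1 PW LP Qh).
by move=> _ [q [[Oq Wq] Cq] <-]; exists q => //; split=> //; apply: OWV.
Qed.
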